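(* Let $V=V_{\widehat{\mathfrak h}}(1,0)$, $\omega=\omega_0$, and $\omega'\in\operatorname{Sc}(V,\omega)$ with $Y(\omega',z)=\sum_nL'(n)z^{-n-2}$. Identifying $V_1$ with $\mathfrak h$ via $h(-1)\mathbf 1\leftrightarrow h$, one has $\operatorname{Im}\mathcal A_{\omega'}=\operatorname{Ker}_V(L(-1)-L'(-1))\cap V_1$ and $\operatorname{Ker}\mathcal A_{\omega'}=\operatorname{Ker}_VL'(-1)\cap V_1$.
   Context: $\mathfrak h$: $d$-dimensional complex space with nondegenerate symmetric bilinear form and fixed orthonormal basis $h_1,\dots,h_d$; $V_{\widehat{\mathfrak h}}(1,0)$ the level 1 Heisenberg vertex algebra, $\omega_0=\frac12\sum_ih_i(-1)^2\mathbf 1$, $Y(\omega_0,z)=\sum_nL(n)z^{-n-2}$. For $\omega'=\sum_{i\le j}a_{ij}h_i(-1)h_j(-1)\mathbf 1+\sum_ib_ih_i(-2)\mathbf 1$, $\mathcal A_{\omega'}\in\operatorname{End}(\mathfrak h)$ has matrix the symmetric matrix with diagonal $2a_{ii}$ and off-diagonal $a_{ij}$. Semi-conformal vectors: conformal vectors $\omega'$ of vertex operator subalgebras $(U,\omega')$ with $\omega_n|_U=\omega'_n|_U$ for $n\ge 0$. *)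

From HB Require Import structures.
From mathcomp Require Import all_boot all_order all_algebra.
Set Implicit Arguments. Unset Strict Implicit. Unset Printing Implicit Defensive.
Import Order.TTheory GRing.Theory Num.Theory.
Local Open Scope ring_scope.

Definition gbinom (C : fieldType) (m : int) (i : nat) : C :=
  (\prod_(j < i) (m%:~R - j%:R)) / (i`!)%:R.
Arguments gbinom C m i : clear implicits.

Section VA.
Variables (C : fieldType) (V : lmodType C).
(* Y u n v = u_n v  (the n-th mode of the vertex operator Y(u,z)) *)
Variable Y : V -> int -> V -> V.
Variable vac : V.

Record is_VA : Prop := {
  va_linr : forall u n a v w, Y u n (a *: v + w) = a *: Y u n v + Y u n w;
  va_linl : forall u u' n a v, Y (a *: u + u') n v = a *: Y u n v + Y u' n v;
  va_trunc : forall u v, exists k : int, forall n : int, k <= n -> Y u n v = 0;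
  va_vac : forall (n : int) v, Y vac n v = if n == -1 then v else 0;
  va_creation : forall u, Y u (-1) vac = u /\ forall n : int, 0 <= n -> Y u n vac = 0;
  va_borcherds : forall u v w (m n r : int), exists N0 : nat, forall N : nat, (N0 <= N)%N ->
    \sum_(i < N) gbinom C m i *: Y (Y u (r + i%:Z) v) (m + n - i%:Z) w =
    \sum_(i < N) ((-1) ^+ i * gbinom C r i) *:
        (Y u (m + r - i%:Z) (Y v (n + i%:Z) w)
         - (-1) ^ r *: Y v (n + r - i%:Z) (Y u (m + i%:Z) w))
}.

Definition generates (S : V -> Prop) : Prop :=
  forall W : V -> Prop, W vac -> (forall s, S s -> W s) ->
    (forall a x y, W x -> W y -> W (a *: x + y)) ->
    (forall x y n, W x -> W y -> W (Y x n y)) -> forall v, W v.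

(* (V, Y, vac) is the level one Heisenberg vertex algebra V_{\hat h}(1,0) for
   the d-dimensional h with orthonormal basis h_1..h_d; here h i = h_i(-1)1 *)
Record is_heisenberg (d : nat) (h : 'I_d -> V) : Prop := {
  heis_va : is_VA;
  heis_nonzero : vac != 0;
  heis_rel : forall (i j : 'I_d) (m : int), 0 <= m ->
     Y (h i) m (h j) = if (m == 1) && (i == j) then vac else 0;
  heis_gen : generates (fun v => exists i, v = h i)
}.

(* (U, Y|_U, vac, w) is a vertex operator subalgebra of V with conformal vector w;
   L_w(n) = w_{n+1} *)
Record is_VOA_sub (U : V -> Prop) (w : V) : Prop := {
  sub_vac : U vac;
  sub_w : U w;
  sub_lin : forall a x y, U x -> U y -> U (a *: x + y);
  sub_mode : forall x y n, U x -> U y -> U (Y x n y);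
  sub_vir : exists c : C, forall (m n : int) u, U u ->
     Y w (m + 1) (Y w (n + 1) u) - Y w (n + 1) (Y w (m + 1) u) =
     (m - n)%:~R *: Y w (m + n + 1) u
     + (if m + n == 0 then ((m ^+ 3 - m)%:~R / 12%:R * c) else 0) *: u;
  sub_deriv : forall u x (n : int), U u -> U x ->
     Y (Y w 0 u) n x = (- n%:~R) *: Y u (n - 1) x;
  sub_grad : forall u, U u -> exists s : seq (int * V),
     u = \sum_(p <- s) p.2 /\
     forall p, p \in s -> U p.2 /\ Y w 1 p.2 = p.1%:~R *: p.2;
  sub_fin : forall n : int, exists s : seq V, forall u, U u ->
     Y w 1 u = n%:~R *: u ->
     exists c : 'I_(size s) -> C, u = \sum_(j < size s) c j *: nth 0 s j;
  sub_low : exists N : int, forall n : int, n < N -> forall u, U u ->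
     Y w 1 u = n%:~R *: u -> u = 0
}.

Definition semi_conformal (om w' : V) : Prop :=
  exists U : V -> Prop, is_VOA_sub U w' /\
    forall (n : int) u, 0 <= n -> U u -> Y om n u = Y w' n u.

End VA.

Section Heis.
Variables (C : fieldType) (V : lmodType C) (Y : V -> int -> V -> V) (vac : V).
Variables (d : nat) (h : 'I_d -> V).

Definition omega0 : V := (2%:R : C)^-1 *: \sum_(i < d) Y (h i) (-1) (h i).

Definition omega' (a : 'I_d -> 'I_d -> C) (b : 'I_d -> C) : V :=
  \sum_(i < d) \sum_(j < d | (i <= j)%N) a i j *: Y (h i) (-1) (h j)
  + \sum_(i < d) b i *: Y (h i) (-2) vac.

(* the element x = sum_i x_i h_i of h, viewed in V_1 as h(-1)1 *)
Definition hvec (x : 'cV[C]_d) : V := \sum_(i < d) x i 0 *: h i.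

End Heis.

Definition Amat (C : fieldType) (d : nat) (a : 'I_d -> 'I_d -> C) : 'M[C]_d :=
  \matrix_(i, j) (if i == j then 2%:R * a i i
                  else if (i < j)%N then a i j else a j i).

(* Write om' = sum a_ij h_i(-1)h_j(-1)1 + sum b_i h_i(-2)1 and A = Amat a. The
   commutator and iterate formulas give om'_0 (x(-1)1) = (A x)(-2)1 for x in h and
   [h_k(n), om'_1] = n (A h_k)(n). For om' = omega0 we have A = 1, so L(0) = om_1 acts
   on h_i1(n1)...h_ir(nr)1 by -(n1 + ... + nr); since these monomials span V, the
   eigenvalue-1 eigenspace V_1 of L(0) is {x(-1)1 | x in h}. As x(-2)1 = 0 only for
   x = 0, Ker L'(-1) on V_1 is Ker A and Ker (L(-1) - L'(-1)) on V_1 is Ker (1 - A).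
   Finally the semi-conformal condition om_1 om' = om'_1 om', probed by h_l(1) h_k(1),
   reads 2 A = 2 A^2, so Ker (1 - A) = Im A. *)

From HB Require Import structures.
From mathcomp Require Import all_boot all_order all_algebra.
From mathcomp Require Import zify.
Import Order.TTheory GRing.Theory Num.Theory.
Set Implicit Arguments. Unset Strict Implicit. Unset Printing Implicit Defensive.
Local Open Scope ring_scope.

Lemma big_ord_trunc (M : nmodType) K N (leKN : (K <= N)%N) (F : 'I_N -> M) :
  (forall i : 'I_N, (K <= i)%N -> F i = 0) ->
  \sum_(i < N) F i = \sum_(i < K) F (widen_ord leKN i).
Proof.
move=> F0; rewrite -(big_ord_narrow_cond (P := xpredT) leKN) [RHS]big_mkcond /=.
by apply: eq_bigr => i _; case: ltnP => // /F0.
Qed.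

Section EigenvectorSums.
Variables (C : fieldType) (V : lmodType C) (f : V -> V).
Hypothesis f_lin : forall c x y, f (c *: x + y) = c *: f x + f y.

Let fD x y : f (x + y) = f x + f y.
Proof. by rewrite -[x]scale1r f_lin !scale1r. Qed.

Let f0 : f 0 = 0.
Proof. by apply/(@addrI _ (f 0)); rewrite -fD !addr0. Qed.

Let fZ c x : f (c *: x) = c *: f x.
Proof. by rewrite -[c *: x]addr0 f_lin f0 addr0. Qed.

Lemma eigen_sum_eq0 (s : seq (C * V)) lam :
  (forall p, p \in s -> f p.2 = p.1 *: p.2 /\ p.1 != lam) ->
  f (\sum_(p <- s) p.2) = lam *: \sum_(p <- s) p.2 -> \sum_(p <- s) p.2 = 0.
Proof.
move: {2}(size s) (erefl (size s)) => n; elim: n s lam => [|n IH] [|p s] lam //=.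
  by rewrite big_nil.
move=> [size_s] eig_s; set W := \sum_(q <- s) q.2; rewrite big_cons -/W => eig_sum.
have [eig_p p_lam] := eig_s p (mem_head _ _).
have f_sum (r : seq (C * V)) : f (\sum_(q <- r) q.2) = \sum_(q <- r) f q.2.
  exact: (big_morph f fD f0).
have eig_W : f W = \sum_(q <- s) q.1 *: q.2.
  rewrite f_sum big_seq [RHS]big_seq; apply: eq_bigr => q q_s.
  by case: (eig_s q); rewrite ?in_cons ?q_s ?orbT.
(* apply [f - p.1] to kill the [p]-component *)
pose s' := [seq (q.1, (q.1 - p.1) *: q.2) | q <- s].
have sum_s' : \sum_(q <- s') q.2 = (lam - p.1) *: (p.2 + W).
  rewrite big_map (eq_bigr (fun q => q.1 *: q.2 - p.1 *: q.2)) => [|q _]; last by rewrite scalerBl.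
  rewrite sumrB -eig_W -scaler_sumr -/W.
  have -> : f W = lam *: (p.2 + W) - p.1 *: p.2 by rewrite -eig_sum fD eig_p addrC addKr.
  by rewrite scalerBl scalerDr [in RHS]scalerDr opprD addrA.
have /eqP : \sum_(q <- s') q.2 = 0.
  apply: (IH s' lam); first by rewrite size_map.
    move=> q /mapP [q' q'_s ->] /=; case: (eig_s q'); rewrite ?in_cons ?q'_s ?orbT // => eig_q' ?.
    by split=> //; rewrite fZ eig_q' !scalerA mulrC.
  by rewrite sum_s' fZ eig_sum scalerA mulrC -scalerA.
by rewrite sum_s' scaler_eq0 subr_eq0 eq_sym (negbTE p_lam) => /eqP.
Qed.

End EigenvectorSums.

Section GeneralizedBinomial.
Variable C : fieldType.

Lemma gbinom0 m : gbinom C m 0 = 1.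
Proof. by rewrite /gbinom big_ord0 fact0 divr1. Qed.

Lemma gbinom1 m : gbinom C m 1 = m%:~R.
Proof. by rewrite /gbinom big_ord1 divr1 subr0. Qed.

Lemma gbinom0S i : gbinom C 0 i.+1 = 0.
Proof. by rewrite /gbinom big_ord_recl /= subrr !mul0r. Qed.

End GeneralizedBinomial.

Section VertexAlgebra.
Variables (C : fieldType) (V : lmodType C) (Y : V -> int -> V -> V) (vac : V).
Hypothesis VA : is_VA Y vac.

Lemma YDr u n v w : Y u n (v + w) = Y u n v + Y u n w.
Proof. by have := va_linr VA u n 1 v w; rewrite !scale1r. Qed.

Lemma Y0r u n : Y u n 0 = 0.
Proof. by apply/(@addrI _ (Y u n 0)); rewrite -YDr !addr0. Qed.

Lemma YZr u n c v : Y u n (c *: v) = c *: Y u n v.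
Proof. by have := va_linr VA u n c v 0; rewrite !addr0 Y0r addr0. Qed.

Lemma YDl u u' n v : Y (u + u') n v = Y u n v + Y u' n v.
Proof. by have := va_linl VA u u' n 1 v; rewrite !scale1r. Qed.

Lemma Y0l n v : Y 0 n v = 0.
Proof. by apply/(@addrI _ (Y 0 n v)); rewrite -YDl !addr0. Qed.

Lemma YZl u n c v : Y (c *: u) n v = c *: Y u n v.
Proof. by have := va_linl VA u 0 n c v; rewrite !addr0 Y0l addr0. Qed.

Lemma Y_sumr u n I (r : seq I) (P : pred I) (F : I -> V) :
  Y u n (\sum_(i <- r | P i) F i) = \sum_(i <- r | P i) Y u n (F i).
Proof. exact: (big_morph (Y u n) (YDr u n) (Y0r u n)). Qed.

Lemma Y_suml v n I (r : seq I) (P : pred I) (F : I -> V) :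
  Y (\sum_(i <- r | P i) F i) n v = \sum_(i <- r | P i) Y (F i) n v.
Proof. exact: (big_morph (fun u => Y u n v) (fun x y => YDl x y n v) (Y0l n v)). Qed.

Lemma Y_creation u : Y u (-1) vac = u.
Proof. by case: (va_creation VA u). Qed.

Lemma Y_vac_eq0 u n : 0 <= n -> Y u n vac = 0.
Proof. by case: (va_creation VA u) => _; apply. Qed.

Lemma commutator_formula u v w m n K :
  (forall i : nat, (K <= i)%N -> Y u i v = 0) ->
  Y u m (Y v n w) - Y v n (Y u m w) =
  \sum_(i < K) gbinom C m i *: Y (Y u i v) (m + n - i%:Z) w.
Proof.
move=> uv0; have [N0 borch] := va_borcherds VA u v w m n 0.
have := borch (maxn N0 K).+1 (leq_trans (leq_maxl _ _) (leqnSn _)).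
have leKN : (K <= (maxn N0 K).+1)%N by apply: leq_trans (leq_maxr _ _) (leqnSn _).
rewrite (big_ord_trunc leKN) /= => [->|i /uv0 ->]; last by rewrite Y0l scaler0.
rewrite big_ord_recl big1 => [|i _]; last by rewrite gbinom0S mulr0 scale0r.
by rewrite gbinom0 expr0z mul1r !scale1r !addr0.
Qed.

Lemma iterate_formula_ex u v w r n : exists N0 : nat, forall N : nat, (N0 <= N)%N ->
  Y (Y u r v) n w =
  \sum_(i < N) ((-1) ^+ i * gbinom C r i) *:
      (Y u (r - i%:Z) (Y v (n + i%:Z) w) - (-1) ^ r *: Y v (n + r - i%:Z) (Y u i w)).
Proof.
have [N0 borch] := va_borcherds VA u v w 0 n r.
exists N0.+1 => N leN0N; have := borch N (ltnW leN0N).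
case: N leN0N => // N _; rewrite big_ord_recl big1 => [|i _]; last by rewrite gbinom0S scale0r.
rewrite /= gbinom0 scale1r !addr0 add0r => ->.
by under eq_bigr do rewrite !add0r.
Qed.

Lemma iterate_formula u v w r n K :
  (forall i : nat, (K <= i)%N -> Y v (n + i%:Z) w = 0 /\ Y u i w = 0) ->
  Y (Y u r v) n w =
  \sum_(i < K) ((-1) ^+ i * gbinom C r i) *:
      (Y u (r - i%:Z) (Y v (n + i%:Z) w) - (-1) ^ r *: Y v (n + r - i%:Z) (Y u i w)).
Proof.
move=> vw0; have [N0 iter] := iterate_formula_ex u v w r n.
have leKN : (K <= maxn N0 K)%N by apply: leq_maxr.
rewrite (iter (maxn N0 K) (leq_maxl _ _)) (big_ord_trunc leKN) // => i /vw0 [-> ->].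
by rewrite !Y0r scaler0 subrr scaler0.
Qed.

End VertexAlgebra.

Section SymmetricMatrix.
Variables (C : fieldType) (d : nat).

Lemma Amat_sym (a : 'I_d -> 'I_d -> C) i j : Amat a i j = Amat a j i.
Proof.
rewrite !mxE eq_sym; case: eqVneq => [->//|_].
by case: ltngtP => // /val_inj ->.
Qed.

Lemma sum_upper_Amat (V : lmodType C) (a : 'I_d -> 'I_d -> C) (X : 'I_d -> V) k :
  \sum_(i < d) \sum_(j < d | (i <= j)%N)
     a i j *: ((if j == k then X i else 0) + (if i == k then X j else 0)) =
  \sum_(m < d) Amat a m k *: X m.
Proof.
have upper (i : 'I_d) : \sum_(j < d | (i <= j)%N) a i j *: (if j == k then X i else 0) =
    if (i <= k)%N then a i k *: X i else 0.
  rewrite big_mkcond (bigD1 k) //= big1 => [|j /negbTE ->]; last by case: ifP; rewrite ?scaler0.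
  by rewrite eqxx addr0; case: ifP.
have lower : \sum_(i < d) \sum_(j < d | (i <= j)%N) a i j *: (if i == k then X j else 0) =
    \sum_(j < d | (k <= j)%N) a k j *: X j.
  rewrite (bigD1 k) //= [X in _ + X]big1 => [|i /negbTE i_k]; last first.
    by rewrite big1 // => j _; rewrite i_k scaler0.
  by rewrite addr0; apply: eq_bigr => j _; rewrite eqxx.
under eq_bigr do rewrite (eq_bigr _ (fun j _ => scalerDr _ _ _)) big_split /= upper.
rewrite big_split /= lower [X in _ + X]big_mkcond -big_split /=.
apply: eq_bigr => m _; rewrite mxE.
case: ltngtP => [mk|km|/val_inj ->]; rewrite ?eqxx ?addr0 ?add0r //.
- by rewrite ifF //; apply/negbTE; rewrite neq_ltn mk.
- by rewrite ifF //; apply/negbTE; rewrite neq_ltn km orbT.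
- by rewrite -scalerDl mulr_natl mulr2n.
Qed.

End SymmetricMatrix.

Section Heisenberg.
Variables (C : numFieldType) (V : lmodType C) (Y : V -> int -> V -> V) (vac : V).
Variables (d : nat) (h : 'I_d -> V).
Hypothesis HV : is_heisenberg Y vac h.

Let VA : is_VA Y vac := heis_va HV.

Lemma h_rel i j m : 0 <= m -> Y (h i) m (h j) = if (m == 1) && (i == j) then vac else 0.
Proof. exact: (heis_rel HV). Qed.

Lemma h_comm i j (n m : int) w :
  Y (h i) n (Y (h j) m w) =
  Y (h j) m (Y (h i) n w) + (if (i == j) && (n + m == 0) then n%:~R else 0) *: w.
Proof.
apply/eqP; rewrite addrC -subr_eq; apply/eqP.
rewrite (commutator_formula VA _ _ _ (K := 2)) => [|l le2l]; last first.
  by case: l le2l => [|[|l]] // _; rewrite h_rel.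
rewrite big_ord_recl big_ord1 !lift0 /= !h_rel //= (Y0l VA) scaler0 add0r gbinom1.
case: eqP => _; last by rewrite (Y0l VA) !scaler0 scale0r.
rewrite (va_vac VA); case: eqP => nm1; case: eqP => nm //=; try lia.
by rewrite scaler0 scale0r.
Qed.

Lemma h_rel_ge2 i j (m : int) : 2 <= m -> Y (h i) m (h j) = 0.
Proof. by move=> m2; rewrite h_rel; [case: eqP => // m1; lia | lia]. Qed.

Lemma hh_mode_h a b k n : 0 <= n ->
  Y (Y (h a) (-1) (h b)) n (h k) =
  (if b == k then Y (h a) (n - 2) vac else 0) + (if a == k then Y (h b) (n - 2) vac else 0).
Proof.
move=> n0; rewrite (iterate_formula VA _ _ (K := 2)) => [|l le2l]; last first.
  by rewrite !h_rel_ge2 //; lia.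
rewrite big_ord_recl big_ord1 !lift0 /= !h_rel //=; try lia.
rewrite expr0 gbinom0 mul1r scale1r expr1 gbinom1 mulrNN mul1r scale1r exprN1 invrN1.
have -> : n - 1 - 1%Z = n - 2 by lia.
rewrite (Y0r VA) scaler0 subr0 !scaleN1r opprK addrA; congr (_ + _); last first.
  by case: eqP => _; rewrite ?(Y0r VA).
have -> : (n + 1%Z == 1) = (n == 0) by apply/eqP/eqP; lia.
have -> : -1 - 1%Z = -2 :> int by [].
case: (b == k); rewrite ?andbF ?andbT /= ?(Y0r VA) ?addr0 //.
have [->|n_neq0] := eqVneq n 0; first by rewrite (Y0r VA) add0r.
have [->|n_neq1] := eqVneq n 1; first by rewrite (Y_creation VA) (Y0r VA) addr0.
by rewrite !(Y0r VA) addr0 (Y_vac_eq0 VA) //; lia.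
Qed.

Lemma hD_mode_h a k n : 0 <= n ->
  Y (Y (h a) (-2) vac) n (h k) = (if (n == 2) && (a == k) then - 2%:R else 0) *: vac.
Proof.
move=> n0; rewrite (iterate_formula VA _ _ (K := 2)) => [|l le2l]; last first.
  by rewrite h_rel_ge2 // (va_vac VA) ifF //; apply/eqP; lia.
have n_neqN1 (l : nat) : (n + l%:Z == -1) = false by apply/negbTE/eqP; lia.
rewrite big_ord_recl big_ord1 !lift0 /= !h_rel //= !(va_vac VA) !if_same !n_neqN1.
have -> : (n - 2 - 1%Z == -1) = (n == 2) by apply/eqP/eqP; lia.
have -> : (-1 : C) ^ (-2) = 1 by rewrite -exprnN sqrrN expr1n invr1.
rewrite !(Y0r VA) !scaler0 subr0 scaler0 add0r scale1r expr1 gbinom1 mulrNN mul1r sub0r.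
case: (n == 2) => /=; last by rewrite oppr0 scaler0 scale0r.
by case: (a == k); rewrite ?scaleNr ?scalerN ?scaler0 ?scale0r ?oppr0.
Qed.

Notation om' := (omega' Y vac h).

Lemma omega'_mode_h a b k n : 0 <= n -> n != 2 ->
  Y (om' a b) n (h k) = \sum_(m < d) Amat a m k *: Y (h m) (n - 2) vac.
Proof.
move=> n0 n_neq2; rewrite /omega' (YDl VA) (Y_suml VA) [X in _ + X](Y_suml VA).
rewrite [X in _ + X]big1 ?addr0 => [|i _]; last first.
  by rewrite (YZl VA) hD_mode_h // (negbTE n_neq2) scale0r scaler0.
rewrite -sum_upper_Amat; apply: eq_bigr => i _; rewrite (Y_suml VA).
by apply: eq_bigr => j _; rewrite (YZl VA) hh_mode_h.
Qed.

Lemma h_mode_omega' a b k l : 0 <= l ->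
  Y (h k) l (om' a b) = (if l == 1 then \sum_(m < d) Amat a m k *: h m else 0)
                       + (if l == 2 then (2%:R * b k) *: vac else 0).
Proof.
move=> l0; rewrite /omega' (YDr VA) !(Y_sumr VA); congr (_ + _).
  have [->|l_neq1] := eqVneq l 1.
    rewrite -sum_upper_Amat; apply: eq_bigr => i _; rewrite (Y_sumr VA); apply: eq_bigr => j _.
    rewrite (YZr VA) h_comm h_rel // eq_sym [k == i]eq_sym.
    by case: (j == k); case: (i == k);
      rewrite /= ?(Y0r VA) ?(Y_creation VA) ?scale0r ?scale1r ?addr0 ?add0r.
  apply: big1 => i _; rewrite (Y_sumr VA) big1 // => j _.
  rewrite (YZr VA) h_comm h_rel // (negbTE l_neq1) /= (Y0r VA) add0r.
  by rewrite ifN ?scale0r ?scaler0 //; apply/nandP; right; apply/eqP; lia.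
have [->|l_neq2] := eqVneq l 2.
  rewrite (bigD1 k) //= big1 ?addr0 => [|i /negbTE i_k].
    by rewrite (YZr VA) h_comm (Y_vac_eq0 VA) // (Y0r VA) add0r eqxx /= scalerA mulrC.
  by rewrite (YZr VA) h_comm (Y_vac_eq0 VA) // (Y0r VA) add0r eq_sym i_k scale0r scaler0.
apply: big1 => i _; rewrite (YZr VA) h_comm (Y_vac_eq0 VA) // (Y0r VA) add0r.
by rewrite ifN ?scale0r ?scaler0 //; apply/nandP; right; apply/eqP; lia.
Qed.

Lemma omega'_comm_h a b k (n : int) w :
  Y (h k) n (Y (om' a b) 1 w) - Y (om' a b) 1 (Y (h k) n w) =
  n%:~R *: \sum_(m < d) Amat a m k *: Y (h m) n w.
Proof.
rewrite (commutator_formula VA _ _ _ (K := 3)) => [|l le3l]; last first.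
  by rewrite h_mode_omega' // !ifF ?addr0 //; apply/eqP; lia.
rewrite !big_ord_recl big_ord0 !lift0 /= !h_mode_omega' //= !addr0 !add0r (Y0l VA) scaler0 add0r.
have -> : n + 1 - 1%Z = n by lia.
rewrite gbinom1 (Y_suml VA) (YZl VA) (va_vac VA) -[RHS]addr0; congr (_ *: _ + _).
  by apply: eq_bigr => m _; rewrite (YZl VA).
case: eqP => [n0|_]; last by rewrite !scaler0.
have -> : n = 0 by lia.
by rewrite gbinom0S !scale0r.
Qed.

Definition omega0_coef : 'I_d -> 'I_d -> C := fun i j => if i == j then 2%:R^-1 else 0.

Lemma omega0E : omega0 Y h = om' omega0_coef (fun=> 0).
Proof.
rewrite /omega0 /omega' [X in _ = _ + X]big1 ?addr0 => [|i _]; last by rewrite scale0r.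
rewrite scaler_sumr; apply: eq_bigr => i _.
rewrite (bigD1 i) //= big1 ?addr0 => [|j /andP [_ j_i]]; first by rewrite /omega0_coef eqxx.
by rewrite /omega0_coef eq_sym (negbTE j_i) scale0r.
Qed.

Lemma Amat_omega0_coef : Amat omega0_coef = 1%:M.
Proof.
apply/matrixP => i j; rewrite !mxE /omega0_coef.
by case: eqVneq => [->|_]; [rewrite eqxx mulfV // pnatr_eq0 | case: ifP].
Qed.

Notation om := (omega0 Y h).

Lemma omega0_comm_h k n w :
  Y om 1 (Y (h k) n w) = Y (h k) n (Y om 1 w) - n%:~R *: Y (h k) n w.
Proof.
have := omega'_comm_h omega0_coef (fun=> 0) k n w.
rewrite -omega0E Amat_omega0_coef (bigD1 k) //= big1 => [|m /negbTE m_k]; last first.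
  by rewrite mxE m_k scale0r.
by rewrite mxE eqxx scale1r addr0 => <-; rewrite opprB addrC subrK.
Qed.

(* [monomial k u]: [u] is a multiple of h_i1(n1)...h_ir(nr)1 with all nj < 0,
   of weight k = -(n1 + ... + nr). *)
Inductive monomial : int -> V -> Prop :=
| monomial_vac : monomial 0 vac
| monomialZ k c u : monomial k u -> monomial k (c *: u)
| monomial_h k i n u : n < 0 -> monomial k u -> monomial (k - n) (Y (h i) n u).

Inductive monomial_span : V -> Prop :=
| monomial_span0 : monomial_span 0
| monomial_spanD1 k u w : monomial k u -> monomial_span w -> monomial_span (u + w).

Lemma monomial_span_monomial k u : monomial k u -> monomial_span u.
Proof. by move=> mu; rewrite -[u]addr0; apply: monomial_spanD1 mu monomial_span0. Qed.

Lemma monomial_spanD x y : monomial_span x -> monomial_span y -> monomial_span (x + y).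
Proof.
move=> + sy; elim=> [|k u w mu _ IH]; first by rewrite add0r.
by rewrite -addrA; apply: monomial_spanD1 mu IH.
Qed.

Lemma monomial_spanZ c x : monomial_span x -> monomial_span (c *: x).
Proof.
elim=> [|k u w mu _ IH]; first by rewrite scaler0; apply: monomial_span0.
by rewrite scalerDr; apply: monomial_spanD1 (monomialZ c mu) IH.
Qed.

Lemma monomial_span_sum (I : finType) (F : I -> V) :
  (forall i, monomial_span (F i)) -> monomial_span (\sum_i F i).
Proof. by move=> sF; apply: big_ind => //; [apply: monomial_span0 | apply: monomial_spanD]. Qed.

Lemma monomial_span_hneg i n x : n < 0 -> monomial_span x -> monomial_span (Y (h i) n x).
Proof.
move=> n0; elim=> [|k u w mu _ IH]; first by rewrite (Y0r VA); apply: monomial_span0.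
by rewrite (YDr VA); apply: monomial_spanD IH; apply: monomial_span_monomial (monomial_h i n0 mu).
Qed.

(* annihilators h_i(n), n >= 0, are commuted to the right until they hit the vacuum *)
Lemma monomial_h_nonneg k u i n : monomial k u -> 0 <= n -> monomial_span (Y (h i) n u).
Proof.
move=> mu; elim: mu i n => [|k' c u' _ IH|k' j m u' m0 mu IH] i n n0.
- by rewrite (Y_vac_eq0 VA) //; apply: monomial_span0.
- by rewrite (YZr VA); apply/monomial_spanZ/IH.
- rewrite h_comm; apply: monomial_spanD; first exact/monomial_span_hneg/IH.
  exact/monomial_spanZ/(monomial_span_monomial mu).
Qed.

Lemma monomial_span_h i n x : monomial_span x -> monomial_span (Y (h i) n x).
Proof.
elim=> [|k u w mu _ IH]; first by rewrite (Y0r VA); apply: monomial_span0.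
rewrite (YDr VA); apply: monomial_spanD IH.
case: (ltP n 0) => n0; first exact: monomial_span_monomial (monomial_h i n0 mu).
exact: monomial_h_nonneg mu n0.
Qed.

Lemma monomial_Y k u n y : monomial k u -> monomial_span y -> monomial_span (Y u n y).
Proof.
move=> mu; elim: mu n y => [|k' c u' _ IH|k' i r u' _ _ IH] n y sy.
- by rewrite (va_vac VA); case: ifP => // _; apply: monomial_span0.
- by rewrite (YZl VA); apply/monomial_spanZ/IH.
- have [N0 iter] := iterate_formula_ex VA (h i) u' y r n; rewrite (iter N0) //.
  apply: monomial_span_sum => l; apply: monomial_spanZ; apply: monomial_spanD.
    exact/monomial_span_h/IH.
  by rewrite -scaleN1r; apply/monomial_spanZ/monomial_spanZ/IH/monomial_span_h.
Qed.

Lemma monomial_span_Y x n y : monomial_span x -> monomial_span y -> monomial_span (Y x n y).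
Proof.
move=> + sy; elim=> [|k u w mu _ IH]; first by rewrite (Y0l VA); apply: monomial_span0.
by rewrite (YDl VA); apply: monomial_spanD IH; apply: monomial_Y mu sy.
Qed.

Lemma monomial_span_all v : monomial_span v.
Proof.
move: v; apply: (heis_gen HV).
- exact: monomial_span_monomial monomial_vac.
- move=> _ [i ->]; rewrite -(Y_creation VA (h i)).
  by apply/monomial_span_monomial/monomial_h/monomial_vac.
- by move=> c x y sx sy; apply/monomial_spanD/sy/monomial_spanZ.
- by move=> x y n; apply: monomial_span_Y.
Qed.

Lemma hvec0 : hvec h 0 = 0.
Proof. by rewrite /hvec big1 // => i _; rewrite mxE scale0r. Qed.

Lemma hvecD x y : hvec h (x + y) = hvec h x + hvec h y.
Proof. by rewrite /hvec -big_split; apply: eq_bigr => i _; rewrite mxE scalerDl. Qed.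

Lemma hvecZ c x : hvec h (c *: x) = c *: hvec h x.
Proof. by rewrite /hvec scaler_sumr; apply: eq_bigr => i _; rewrite mxE scalerA. Qed.

Lemma hvec_delta i : hvec h (delta_mx i 0) = h i.
Proof.
rewrite /hvec (bigD1 i) //= big1 => [|j /negbTE j_i]; last by rewrite mxE j_i scale0r.
by rewrite mxE !eqxx scale1r addr0.
Qed.

Lemma omega0_mode1_hvec x : Y om 1 (hvec h x) = hvec h x.
Proof.
rewrite /hvec (Y_sumr VA); apply: eq_bigr => i _; rewrite (YZr VA) -(Y_creation VA (h i)).
by rewrite omega0_comm_h (Y_vac_eq0 VA) // (Y0r VA) sub0r scaleN1r opprK.
Qed.

Lemma monomial_weight k u : monomial k u ->
  [/\ Y om 1 u = k%:~R *: u, k <= 0 -> exists c, u = c *: vac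
    & k = 1 -> exists x, u = hvec h x].
Proof.
elim=> [|k' c u' _ [eig_u' vac_u' hvec_u']|k' i n u' n0 _ [eig_u' vac_u' hvec_u']].
- split=> [|_|//]; first by rewrite (Y_vac_eq0 VA) // scale0r.
  by exists 1; rewrite scale1r.
- split; first by rewrite (YZr VA) eig_u' !scalerA mulrC.
    by move=> /vac_u' [c' ->]; exists (c * c'); rewrite scalerA.
  by move=> /hvec_u' [x ->]; exists (c *: x); rewrite hvecZ.
- (* vac has weight 0, so a multiple of vac of nonzero weight vanishes *)
  have u'0 : k' <= 0 -> u' = 0 \/ k' = 0.
    move=> /vac_u' [c u'E]; have [->|k'0] := eqVneq k' 0; [by right | left].
    move: eig_u'; rewrite u'E (YZr VA) (Y_vac_eq0 VA) // scaler0 scalerA => /esym/eqP.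
    rewrite scaler_eq0 (negbTE (heis_nonzero HV)) orbF mulf_eq0 intr_eq0 (negbTE k'0).
    by move=> /eqP ->; rewrite scale0r.
  split; first by rewrite omega0_comm_h eig_u' (YZr VA) -scalerBl intrB.
    by move=> k'n0; case: (u'0 ltac:(lia)) => [->|]; [exists 0; rewrite (Y0r VA) scale0r | lia].
  move=> k'n1; case: (u'0 ltac:(lia)) => [->|k'0]; first by exists 0; rewrite (Y0r VA) hvec0.
  have [c ->] := vac_u' ltac:(lia); have -> : n = -1 by lia.
  by exists (c *: delta_mx i 0); rewrite (YZr VA) (Y_creation VA) hvecZ hvec_delta.
Qed.

Lemma weight1_hvec v : Y om 1 v = v -> exists x, v = hvec h x.
Proof.
have [x [s [vE eig_s]]] : exists x (s : seq (C * V)), v = hvec h x + \sum_(p <- s) p.2 /\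
    forall p, p \in s -> Y om 1 p.2 = p.1 *: p.2 /\ p.1 != 1.
  elim: (monomial_span_all v) => [|k u w mu _ [x [s [wE eig_s]]]].
    by exists 0, [::]; rewrite hvec0 big_nil addr0.
  have [eig_u _ hvec_u] := monomial_weight mu.
  have [k1|k_neq1] := eqVneq k 1.
    by have [x' ->] := hvec_u k1; exists (x' + x), s; rewrite hvecD wE addrA.
  exists x, ((k%:~R, u) :: s); split; first by rewrite big_cons wE addrCA.
  move=> p; rewrite in_cons => /predU1P [->|/eig_s //] /=.
  by split=> //; rewrite (_ : 1 = 1%:~R) // eqr_int.
move=> eig_v; exists x; rewrite vE (eigen_sum_eq0 (va_linr VA om 1) eig_s) ?addr0 //.
apply: (@addrI _ (Y om 1 (hvec h x))); rewrite -(YDr VA) -vE eig_v {1}vE scale1r.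
by rewrite omega0_mode1_hvec.
Qed.

(* [hvec_deriv x] is [L(-1)] applied to [hvec h x], i.e. [x(-2)1] *)
Definition hvec_deriv (x : 'cV[C]_d) : V := \sum_(m < d) x m 0 *: Y (h m) (-2) vac.

Lemma hvec_deriv0 : hvec_deriv 0 = 0.
Proof. by rewrite /hvec_deriv big1 // => m _; rewrite mxE scale0r. Qed.

Lemma hvec_derivB x y : hvec_deriv x - hvec_deriv y = hvec_deriv (x - y).
Proof. by rewrite /hvec_deriv -sumrB; apply: eq_bigr => m _; rewrite !mxE scalerBl. Qed.

Lemma hvec_deriv_eq0 x : hvec_deriv x = 0 -> x = 0.
Proof.
move=> x0; apply/matrixP => j k; rewrite ord1 mxE.
have : Y (h j) 2 (hvec_deriv x) = (x j 0 * 2%:R) *: vac.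
  rewrite /hvec_deriv (Y_sumr VA) (bigD1 j) //= big1 => [|m /negbTE m_j].
    by rewrite (YZr VA) h_comm (Y_vac_eq0 VA) // (Y0r VA) add0r eqxx /= scalerA addr0.
  by rewrite (YZr VA) h_comm (Y_vac_eq0 VA) // (Y0r VA) add0r eq_sym m_j scale0r scaler0.
rewrite x0 (Y0r VA) => /esym/eqP; rewrite scaler_eq0 (negbTE (heis_nonzero HV)) orbF.
by rewrite mulf_eq0 pnatr_eq0 orbF => /eqP.
Qed.

Lemma omega'_mode0_hvec a b x : Y (om' a b) 0 (hvec h x) = hvec_deriv (Amat a *m x).
Proof.
rewrite /hvec /hvec_deriv (Y_sumr VA).
under eq_bigr do rewrite (YZr VA) omega'_mode_h // scaler_sumr.
rewrite exchange_big; apply: eq_bigr => m _ /=; rewrite mxE scaler_suml.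
by apply: eq_bigr => k _; rewrite scalerA mulrC.
Qed.

Lemma omega0_mode0_hvec x : Y om 0 (hvec h x) = hvec_deriv x.
Proof. by rewrite omega0E omega'_mode0_hvec Amat_omega0_coef mul1mx. Qed.

Lemma h_mode1_omega'_mode1 a b k w :
  Y (h k) 1 (Y (om' a b) 1 w) =
  Y (om' a b) 1 (Y (h k) 1 w) + \sum_(m < d) Amat a m k *: Y (h m) 1 w.
Proof. by rewrite -[X in _ + X]scale1r -(omega'_comm_h a b k 1 w) addrC subrK. Qed.

Lemma h_mode1_h_mode1_omega' a b l k : Y (h l) 1 (Y (h k) 1 (om' a b)) = Amat a l k *: vac.
Proof.
rewrite h_mode_omega' //= addr0 (Y_sumr VA) (bigD1 l) //= big1 => [|m /negbTE m_l].
  by rewrite (YZr VA) h_rel //= eqxx addr0 Amat_sym.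
by rewrite (YZr VA) h_rel //= eq_sym m_l scaler0.
Qed.

Lemma h_mode1_h_mode1_omega'_mode1 a' b' a b l k :
  Y (h l) 1 (Y (h k) 1 (Y (om' a' b') 1 (om' a b))) =
  (Amat a' *m Amat a + Amat a *m Amat a') l k *: vac.
Proof.
rewrite h_mode1_omega'_mode1 (YDr VA) h_mode1_omega'_mode1 h_mode1_h_mode1_omega'.
rewrite (YZr VA) (Y_vac_eq0 VA) //.
rewrite scaler0 add0r (Y_sumr VA) mxE scalerDl !mxE !scaler_suml.
congr (_ + _); apply: eq_bigr => m _; rewrite ?(YZr VA) h_mode1_h_mode1_omega' scalerA.
  by rewrite Amat_sym [Amat a m k]Amat_sym mulrC.
by rewrite mulrC.
Qed.

Lemma Amat_idem a b : semi_conformal Y vac om (om' a b) -> Amat a *m Amat a = Amat a.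
Proof.
case=> U [subU agree]; apply/matrixP => l k.
have := h_mode1_h_mode1_omega'_mode1 omega0_coef (fun=> 0) a b l k.
rewrite -omega0E (agree _ _ _ (sub_w subU)) // h_mode1_h_mode1_omega'_mode1.
rewrite Amat_omega0_coef mul1mx mulmx1 => /eqP; rewrite -subr_eq0 -scalerBl scaler_eq0.
rewrite (negbTE (heis_nonzero HV)) orbF !mxE -!mulr2n -mulrnBl mulrn_eq0 /= subr_eq0.
by move=> /eqP.
Qed.

Lemma im_Amat_weight1 a b : semi_conformal Y vac om (om' a b) -> forall v,
  (Y om 1 v = v /\ Y om 0 v - Y (om' a b) 0 v = 0) <->
  exists y, v = hvec h (Amat a *m y).
Proof.
move=> /Amat_idem A2 v; split=> [[/weight1_hvec [x ->]]|[y ->]].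
  rewrite omega0_mode0_hvec omega'_mode0_hvec hvec_derivB => /hvec_deriv_eq0 /eqP.
  by rewrite subr_eq0 => /eqP xE; exists x; rewrite -xE.
rewrite omega0_mode1_hvec omega0_mode0_hvec omega'_mode0_hvec hvec_derivB.
by rewrite mulmxA A2 subrr hvec_deriv0.
Qed.

Lemma ker_Amat_weight1 a b v :
  (Y om 1 v = v /\ Y (om' a b) 0 v = 0) <-> exists x, v = hvec h x /\ Amat a *m x = 0.
Proof.
split=> [[/weight1_hvec [x ->]]|[x [-> Ax0]]].
  by rewrite omega'_mode0_hvec => /hvec_deriv_eq0 Ax0; exists x.
by rewrite omega0_mode1_hvec omega'_mode0_hvec Ax0 hvec_deriv0.
Qed.

End Heisenberg.

Theorem proposition4p1 (C : numClosedFieldType) (d : nat) (V : lmodType C)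
  (Y : V -> int -> V -> V) (vac : V) (h : 'I_d -> V)
  (a : 'I_d -> 'I_d -> C) (b : 'I_d -> C) :
  is_heisenberg Y vac h ->
  semi_conformal Y vac (omega0 Y h) (omega' Y vac h a b) ->
  (forall v : V,
     (Y (omega0 Y h) 1 v = v /\
      Y (omega0 Y h) 0 v - Y (omega' Y vac h a b) 0 v = 0)
     <-> exists y : 'cV[C]_d, v = hvec h (Amat a *m y)) /\
  (forall v : V,
     (Y (omega0 Y h) 1 v = v /\ Y (omega' Y vac h a b) 0 v = 0)
     <-> exists x : 'cV[C]_d, v = hvec h x /\ Amat a *m x = 0).
Proof.
move=> HV sc; split; first exact: im_Amat_weight1 sc.
exact: ker_Amat_weight1.
Qed.
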